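(* For every positive integer $k$, there exist a binary matrix $A_k$ and binary column vectors $x_1,\dots,x_k$ such that $R_{bool}(A_k|x_i)=R_{bool}(A_k)=4$ for all $1\le i\le k$, but $R_{bool}(A_k|x_1,\dots,x_k)\ge k$.
   Context: For a binary $n\times m$ matrix $A$, $R_{bool}(A)$ is the least $k$ such that $A=UV$ with $U\in\{0,1\}^{n\times k}$, $V\in\{0,1\}^{k\times m}$ and the product computed in the Boolean semiring ($1+1=1$). $(A|x_1,\dots,x_t)$ denotes $A$ with the columns $x_1,\dots,x_t$ appended on the right. *)

From mathcomp Require Import all_boot ssralg matrix.
Set Implicit Arguments. Unset Strict Implicit. Unset Printing Implicit Defensive.

Local Open Scope ring_scope.
Definition bool_mul (n k m : nat) (U : 'M[bool]_(n, k)) (V : 'M[bool]_(k, m))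
  : 'M[bool]_(n, m) :=
  \matrix_(i < n, j < m) [exists l : 'I_k, U i l && V l j].

Definition bool_factorizable (n m : nat) (A : 'M[bool]_(n, m)) (k : nat) : bool :=
  [exists U : 'M[bool]_(n, k), exists V : 'M[bool]_(k, m), A == bool_mul U V].

Lemma bool_factorizable_n (n m : nat) (A : 'M[bool]_(n, m)) :
  bool_factorizable A n.
Proof.
apply/existsP; exists (\matrix_(i < n, j < n) (i == j) : 'M[bool]_n).
apply/existsP; exists A; apply/eqP.
apply/matrixP => i j; rewrite !mxE.
apply/idP/existsP => [Aij | [l /andP [+ Hl]]].
  by exists i; rewrite mxE eqxx.
by rewrite mxE => /eqP ->.
Qed.

Local Close Scope ring_scope.

Lemma bool_factorizable_ex (n m : nat) (A : 'M[bool]_(n, m)) :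
  exists k, bool_factorizable A k.
Proof. by exists n; exact: bool_factorizable_n. Qed.

Definition bool_rank (n m : nat) (A : 'M[bool]_(n, m)) : nat :=
  ex_minn (bool_factorizable_ex A).

From mathcomp Require Import all_boot ssralg matrix.
Set Implicit Arguments. Unset Strict Implicit. Unset Printing Implicit Defensive.

(* The lower bound is a fooling-set argument: a family of 1-entries of a
   Boolean matrix, no two of which span an all-ones 2x2 rectangle, must be
   covered by pairwise distinct rank-one factors.  Take for A_k the 4x4 matrix
   with rows e0, e0+e1, e2, e3 followed by k copies of e0+e1, and let x_c be
   e0 plus the indicator of the first c+1 extra rows.  A single x_c is
   absorbed by turning the factor e0 into x_c (extended by the new column),
   while the extra rows together with the nested columns x_1,...,x_k contain a
   fooling set of size k. *)

Lemma bool_rank_factorizable (n m : nat) (A : 'M[bool]_(n, m)) :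
  bool_factorizable A (bool_rank A).
Proof. by rewrite /bool_rank; case: ex_minnP. Qed.

Lemma bool_rank_leq (n m r : nat) (A : 'M[bool]_(n, m)) :
  bool_factorizable A r -> bool_rank A <= r.
Proof. by rewrite /bool_rank; case: ex_minnP => r' _; apply. Qed.

Lemma bool_mul_colsub (n k m m' : nat) (g : 'I_m' -> 'I_m)
    (U : 'M[bool]_(n, k)) (V : 'M[bool]_(k, m)) :
  colsub g (bool_mul U V) = bool_mul U (colsub g V).
Proof.
by apply/matrixP => i j; rewrite !mxE; apply: eq_existsb => l; rewrite mxE.
Qed.

Lemma bool_factorizable_colsub (n m m' r : nat) (g : 'I_m' -> 'I_m)
    (A : 'M[bool]_(n, m)) :
  bool_factorizable A r -> bool_factorizable (colsub g A) r.
Proof.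
case/existsP => U /existsP[V /eqP->]; apply/existsP; exists U.
by apply/existsP; exists (colsub g V); rewrite bool_mul_colsub.
Qed.

Lemma bool_rank_colsub (n m m' : nat) (g : 'I_m' -> 'I_m) (A : 'M[bool]_(n, m)) :
  bool_rank (colsub g A) <= bool_rank A.
Proof. exact/bool_rank_leq/bool_factorizable_colsub/bool_rank_factorizable. Qed.

Lemma bool_rank_row_mxl (n m1 m2 : nat) (A : 'M[bool]_(n, m1)) (B : 'M[bool]_(n, m2)) :
  bool_rank A <= bool_rank (row_mx A B).
Proof. by rewrite -{1}(row_mxKl A B) lsubmxEsub bool_rank_colsub. Qed.

Lemma bool_rank_row_mxr (n m1 m2 : nat) (A : 'M[bool]_(n, m1)) (B : 'M[bool]_(n, m2)) :
  bool_rank B <= bool_rank (row_mx A B).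
Proof. by rewrite -{1}(row_mxKr A B) rsubmxEsub bool_rank_colsub. Qed.

Definition fooling_set (n m s : nat) (A : 'M[bool]_(n, m))
    (f : 'I_s -> 'I_n) (g : 'I_s -> 'I_m) :=
  (forall a, A (f a) (g a)) /\
  (forall a b, a != b -> ~~ (A (f a) (g b) && A (f b) (g a))).

Lemma fooling_set_leq_factorizable (n m s r : nat) (A : 'M[bool]_(n, m))
    (f : 'I_s -> 'I_n) (g : 'I_s -> 'I_m) :
  fooling_set A f g -> bool_factorizable A r -> s <= r.
Proof.
move=> [diag off] /existsP[U /existsP[V /eqP defA]].
have /fin_all_exists[h hP] a : exists l, U (f a) l && V l (g a).
  by apply/existsP; have := diag a; rewrite defA mxE.
suff /leq_card : injective h by rewrite !card_ord.
move=> a b hab; apply/eqP/contraT => /off/negP[]; rewrite defA !mxE.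
have /andP[Ua Va] := hP a; have /andP[Ub Vb] := hP b; rewrite -hab in Ub Vb.
by apply/andP; split; apply/existsP; exists (h a); apply/andP.
Qed.

Lemma fooling_set_leq_bool_rank (n m s : nat) (A : 'M[bool]_(n, m))
    (f : 'I_s -> 'I_n) (g : 'I_s -> 'I_m) :
  fooling_set A f g -> s <= bool_rank A.
Proof.
by move=> fool; apply: fooling_set_leq_factorizable fool (bool_rank_factorizable A).
Qed.

Lemma bool_rank_eq_fooling (n m r : nat) (A : 'M[bool]_(n, m))
    (f : 'I_r -> 'I_n) (g : 'I_r -> 'I_m) :
  fooling_set A f g -> bool_factorizable A r -> bool_rank A = r.
Proof.
move=> fool factA; apply/eqP; rewrite eqn_leq bool_rank_leq //.
exact: fooling_set_leq_bool_rank fool.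
Qed.

Lemma exists_ord4 (P : pred 'I_4) :
  [exists l, P l] =
  [|| P (@Ordinal 4 0 isT), P (@Ordinal 4 1 isT), P (@Ordinal 4 2 isT)
    | P (@Ordinal 4 3 isT)].
Proof.
apply/existsP/or4P => [[[[|[|[|[|//]]]] lt_l4] Pl]|].
- by constructor 1; rewrite (bool_irrelevance isT lt_l4).
- by constructor 2; rewrite (bool_irrelevance isT lt_l4).
- by constructor 3; rewrite (bool_irrelevance isT lt_l4).
- by constructor 4; rewrite (bool_irrelevance isT lt_l4).
by case=> Pl; eexists; exact: Pl.
Qed.

Definition A_k (k : nat) : 'M[bool]_(4 + k, 4) :=
  (\matrix_(i, j)
     (if i < 4 then (i == j :> nat) || (i == 1 :> nat) && (j == 0 :> nat)
      else j <= 1)%N)%R.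

Definition X_k (k : nat) : 'M[bool]_(4 + k, k) :=
  (\matrix_(i, c) ((i == 0 :> nat) || (4 <= i <= c + 4))%N)%R.

Lemma A_k_fooling (k : nat) : fooling_set (A_k k) (@lshift 4 k) id.
Proof.
split; first by move=> [[|[|[|[|//]]]] ?]; rewrite mxE.
by move=> [[|[|[|[|//]]]] ?] [[|[|[|[|//]]]] ?]; rewrite !mxE.
Qed.

Lemma X_k_fooling (k : nat) : fooling_set (X_k k) (@rshift 4 k) id.
Proof.
split=> [a | a b neq_ab]; rewrite !mxE /= ![4 + _]addnC //.
by rewrite !leq_add2r -eqn_leq.
Qed.

Lemma A_k_col_X_k_factorizable (k : nat) (c : 'I_k) :
  bool_factorizable (row_mx (A_k k) (col c (X_k k))) 4.
Proof.
apply/existsP; exists (\matrix_(i, l)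
  (if l == 0 :> nat then X_k k i c
   else if l == 1 :> nat then (i == 1 :> nat) || (4 <= i) else i == l :> nat)%N)%R.
apply/existsP; exists (\matrix_(l < 4, j < 4 + 1)
  (if l == 0 :> nat then (j == 0 :> nat) || (j == 4 :> nat)
   else if l == 1 :> nat then j <= 1 else j == l :> nat)%N)%R.
apply/eqP/matrixP => i j; rewrite [RHS]mxE exists_ord4 !mxE /=.
case: (splitP j) => [j' -> | j' ->]; rewrite !mxE /=.
  by case: i => [[|[|[|[|i]]]] ?]; case: j' => [[|[|[|[|//]]]] ?];
     rewrite //= ?andbT ?andbF ?orbT ?orbF.
by case: j' => [[|//] ?]; case: i => [[|[|[|[|i]]]] ?]; rewrite //= ?andbT ?orbF.
Qed.

Theorem theorem6 :
  forall k : nat, 0 < k ->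
  exists (n m : nat) (A : 'M[bool]_(n, m)) (X : 'M[bool]_(n, k)),
    bool_rank A = 4 /\
    (forall i : 'I_k, bool_rank (row_mx A (col i X)) = 4) /\
    k <= bool_rank (row_mx A X).
Proof.
move=> k k_gt0; exists (4 + k), 4, (A_k k), (X_k k).
have rankA : bool_rank (A_k k) = 4.
  apply: bool_rank_eq_fooling (A_k_fooling k) _.
  rewrite -(row_mxKl (A_k k) (col (Ordinal k_gt0) (X_k k))) lsubmxEsub.
  exact/bool_factorizable_colsub/A_k_col_X_k_factorizable.
split=> //; split=> [c|].
  apply/eqP; rewrite eqn_leq bool_rank_leq ?A_k_col_X_k_factorizable //.
  by rewrite -{1}rankA bool_rank_row_mxl.
apply: leq_trans (bool_rank_row_mxr _ _).
exact: fooling_set_leq_bool_rank (X_k_fooling k).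
Qed.
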